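(* Let $ABC$ be a nondegenerate triangle and $XYZ$ a Miquel triangle of a point $P$ relative to $ABC$. (i) If $P$ is the first Brocard point of $ABC$, then $P$ is the first Brocard point of $XYZ$, i.e. $\angle YXP=\angle ZYP=\angle XZP$. (ii) If $P$ is the second Brocard point of $ABC$, then $P$ is the second Brocard point of $XYZ$, i.e. $\angle PXZ=\angle PYX=\angle PZY$.
   Context: Miquel triangle: given a triangle $ABC$ and a point $P$ not on the lines $BC,CA,AB$, a triangle $XYZ$ with $X$ on line $BC$, $Y$ on line $CA$, $Z$ on line $AB$ is called a Miquel triangle of $P$ relative to $ABC$ if $P$ lies on each of the three circles through $A,Y,Z$, through $B,Z,X$, and through $C,X,Y$. First Brocard point of $ABC$: the point $P$ with $\angle BAP=\angle CBP=\angle ACP$; second Brocard point: the point $P$ with $\angle PAC=\angle PBA=\angle PCB$ (analogously for a triangle $XYZ$ with the vertex order $X,Y,Z$ in place of $A,B,C$). *)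

From Stdlib Require Import Reals Lra.
Open Scope R_scope.

Definition point : Type := (R * R)%type.

Definition vx (A B : point) : R := fst B - fst A.
Definition vy (A B : point) : R := snd B - snd A.

Definition cross3 (A B C : point) : R := vx A B * vy A C - vy A B * vx A C.
Definition dot3 (A B C : point) : R := vx A B * vx A C + vy A B * vy A C.

Definition dist2 (A B : point) : R := vx A B ^ 2 + vy A B ^ 2.

Definition collinear (A B C : point) : Prop := cross3 A B C = 0.

Definition nondeg (A B C : point) : Prop := ~ collinear A B C.

(* X lies on the line through B and C (B <> C assumed elsewhere) *)
Definition on_line (X B C : point) : Prop := collinear B C X.

Definition concyclic (A B C D : point) : Prop :=
  exists (O : point) (r : R), 0 < r /\
    dist2 O A = r /\ dist2 O B = r /\ dist2 O C = r /\ dist2 O D = r.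

(* Directed angles of lines, modulo pi.
   dangle_eq O1 U1 V1 O2 U2 V2 means: the directed angle from line O1U1 to
   line O1V1 equals the directed angle from line O2U2 to line O2V2 (mod pi),
   i.e. the rotations have equal tangent: cross1*dot2 = dot1*cross2.
   (Used only with nonzero vectors.) *)
Definition dangle_eq (O1 U1 V1 O2 U2 V2 : point) : Prop :=
  cross3 O1 U1 V1 * dot3 O2 U2 V2 = dot3 O1 U1 V1 * cross3 O2 U2 V2.

(* First Brocard point: angle BAP = angle CBP = angle ACP
   (directed: from AB to AP, from BC to BP, from CA to CP). *)
Definition first_brocard (A B C P : point) : Prop :=
  dangle_eq A B P B C P /\ dangle_eq B C P C A P.

(* Second Brocard point: angle PAC = angle PBA = angle PCB
   (directed: from AP to AC, from BP to BA, from CP to CB). *)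
Definition second_brocard (A B C P : point) : Prop :=
  dangle_eq A P C B P A /\ dangle_eq B P A C P B.

(* XYZ is a Miquel triangle of P relative to ABC. The circles through A,Y,Z
   etc. are required to exist, i.e. X,Y,Z are distinct from the vertices. *)
Definition miquel_triangle (A B C P X Y Z : point) : Prop :=
  on_line X B C /\ on_line Y C A /\ on_line Z A B /\
  X <> B /\ X <> C /\ Y <> C /\ Y <> A /\ Z <> A /\ Z <> B /\
  X <> Y /\ Y <> Z /\ Z <> X /\
  concyclic A Y Z P /\ concyclic B Z X P /\ concyclic C X Y P.

(* Everything is a chase of directed angles modulo pi.  Each Miquel circle
   turns an angle at a vertex of ABC into the angle at the vertex of XYZ
   subtending the same chord through P (inscribed angle theorem), and moving
   along a side of ABC does not change a line.  For instance
   (XY, XP) = (CY, CP) = (CA, CP) = (AB, AP) = (AZ, AP) = (YZ, YP),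
   where the middle equality is the Brocard property of P for ABC. *)

From Stdlib Require Import Reals Lra.
Open Scope R_scope.

Lemma proportional_trans (c1 d1 c2 d2 c3 d3 : R) :
  c1 * d2 = d1 * c2 -> c2 * d3 = d2 * c3 -> c2 ^ 2 + d2 ^ 2 <> 0 ->
  c1 * d3 = d1 * c3.
Proof.
  intros h12 h23 hnz.
  assert (E : (c1 * d3 - d1 * c3) * (c2 ^ 2 + d2 ^ 2) =
              (c2 * c1 + d2 * d1) * (c2 * d3 - d2 * c3)
              + (c2 * c3 + d2 * d3) * (c1 * d2 - d1 * c2)) by ring.
  rewrite h12, h23, !Rminus_diag, !Rmult_0_r, Rplus_0_r in E.
  apply Rmult_integral in E as [E | E]; [lra | contradiction].
Qed.

Lemma dist2_pos (O U : point) : O <> U -> 0 < dist2 O U.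
Proof.
  destruct O as [o1 o2], U as [u1 u2]; unfold dist2, vx, vy; simpl.
  intro hOU; apply Rnot_le_lt; intro hle; apply hOU.
  pose proof (pow2_ge_0 (u1 - o1)); pose proof (pow2_ge_0 (u2 - o2)).
  assert (h1 : Rsqr (u1 - o1) = 0) by (unfold Rsqr; lra).
  assert (h2 : Rsqr (u2 - o2) = 0) by (unfold Rsqr; lra).
  apply Rsqr_0_uniq in h1, h2; f_equal; lra.
Qed.

Lemma cross3_dot3_sqr (O U V : point) :
  cross3 O U V ^ 2 + dot3 O U V ^ 2 = dist2 O U * dist2 O V.
Proof. unfold cross3, dot3, dist2; ring. Qed.

Lemma cross3_dot3_neq0 (O U V : point) :
  O <> U -> O <> V -> cross3 O U V ^ 2 + dot3 O U V ^ 2 <> 0.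
Proof.
  intros hU hV; rewrite cross3_dot3_sqr.
  apply Rgt_not_eq, Rmult_lt_0_compat; apply dist2_pos; assumption.
Qed.

Lemma dangle_eq_sym (O1 U1 V1 O2 U2 V2 : point) :
  dangle_eq O1 U1 V1 O2 U2 V2 -> dangle_eq O2 U2 V2 O1 U1 V1.
Proof. unfold dangle_eq; lra. Qed.

Lemma dangle_eq_trans (O1 U1 V1 O2 U2 V2 O3 U3 V3 : point) :
  O2 <> U2 -> O2 <> V2 ->
  dangle_eq O1 U1 V1 O2 U2 V2 -> dangle_eq O2 U2 V2 O3 U3 V3 ->
  dangle_eq O1 U1 V1 O3 U3 V3.
Proof.
  intros hU hV h12 h23; apply (proportional_trans _ _ _ _ _ _ h12 h23).
  exact (cross3_dot3_neq0 _ _ _ hU hV).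
Qed.

Lemma dangle_eq_swap (O1 U1 V1 O2 U2 V2 : point) :
  dangle_eq O1 U1 V1 O2 U2 V2 -> dangle_eq O1 V1 U1 O2 V2 U2.
Proof. unfold dangle_eq, cross3, dot3; lra. Qed.

Lemma dangle_eq_collinear_l (O U U' V : point) :
  collinear O U U' -> dangle_eq O U V O U' V.
Proof.
  unfold collinear, dangle_eq; intro hcol.
  assert (E : cross3 O U V * dot3 O U' V - dot3 O U V * cross3 O U' V
              = cross3 O U U' * dist2 O V)
    by (unfold cross3, dot3, dist2, vx, vy; ring).
  rewrite hcol, Rmult_0_l in E; lra.
Qed.

Lemma dangle_eq_collinear_r (O U V V' : point) :
  collinear O V V' -> dangle_eq O U V O U V'.
Proof. intro hcol; apply dangle_eq_swap, dangle_eq_collinear_l, hcol. Qed.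

Lemma collinear_swap12 (A B C : point) : collinear A B C -> collinear B A C.
Proof.
  unfold collinear; intro h.
  replace (cross3 B A C) with (- cross3 A B C) by (unfold cross3, vx, vy; ring).
  rewrite h; ring.
Qed.

Lemma collinear_swap23 (A B C : point) : collinear A B C -> collinear A C B.
Proof.
  unfold collinear; intro h.
  replace (cross3 A C B) with (- cross3 A B C) by (unfold cross3; ring).
  rewrite h; ring.
Qed.

(* The inscribed angle (UV, UQ) is half the central angle VOQ: its tangent is
   cross3 O V Q / (r + dot3 O V Q), equivalently (r - dot3 O V Q) / cross3 O V Q. *)
Lemma inscribed_angle_ratio (O U V Q : point) (r : R) :
  dist2 O U = r -> dist2 O V = r -> dist2 O Q = r ->
  cross3 U V Q * (r + dot3 O V Q) = dot3 U V Q * cross3 O V Q /\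
  cross3 U V Q * cross3 O V Q = dot3 U V Q * (r - dot3 O V Q).
Proof.
  intros hU hV hQ.
  assert (E1 : cross3 U V Q * (r + dot3 O V Q) - dot3 U V Q * cross3 O V Q =
    vx O U * (vy O Q * (dist2 O V - r) - vy O V * (dist2 O Q - r))
    + vy O U * (- vx O Q * (dist2 O V - r) + vx O V * (dist2 O Q - r))
    - (dist2 O U - r) * cross3 O V Q)
    by (unfold cross3, dot3, dist2, vx, vy; ring).
  assert (E2 : cross3 U V Q * cross3 O V Q - dot3 U V Q * (r - dot3 O V Q) =
    vx O U * (- vx O Q * (dist2 O V - r) - vx O V * (dist2 O Q - r))
    + vy O U * (- vy O Q * (dist2 O V - r) - vy O V * (dist2 O Q - r))
    + (dist2 O V - r) * (dist2 O Q - r) + r * (dist2 O V - r)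
    + r * (dist2 O Q - r) - (dist2 O U - r) * (r - dot3 O V Q))
    by (unfold cross3, dot3, dist2, vx, vy; ring).
  rewrite hU, hV, hQ, Rminus_diag in E1, E2.
  split; lra.
Qed.

Lemma inscribed_angle (O U V W Q : point) (r : R) : 0 < r ->
  dist2 O U = r -> dist2 O V = r -> dist2 O W = r -> dist2 O Q = r ->
  dangle_eq U V Q W V Q.
Proof.
  intros hr hU hV hW hQ; unfold dangle_eq.
  destruct (inscribed_angle_ratio O U V Q r hU hV hQ) as [hU1 hU2].
  destruct (inscribed_angle_ratio O W V Q r hW hV hQ) as [hW1 hW2].
  destruct (Req_dec (r + dot3 O V Q) 0) as [hd | hd].
  - apply (proportional_trans _ _ (r - dot3 O V Q) (cross3 O V Q)); [lra | lra |].
    apply Rgt_not_eq; nra.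
  - apply (proportional_trans _ _ (cross3 O V Q) (r + dot3 O V Q)); [lra | lra |].
    apply Rgt_not_eq; nra.
Qed.

Lemma concyclic_inscribed_angle (U V W Q : point) :
  concyclic U V W Q -> dangle_eq U V Q W V Q /\ dangle_eq U W Q V W Q.
Proof.
  intros (O & r & hr & hU & hV & hW & hQ); split.
  - exact (inscribed_angle O U V W Q r hr hU hV hW hQ).
  - exact (inscribed_angle O U W V Q r hr hU hW hV hQ).
Qed.

Lemma not_on_line_neq (P B C : point) : ~ on_line P B C -> P <> B /\ P <> C.
Proof.
  unfold on_line, collinear; intro h; split; intro e; subst; apply h;
  unfold cross3, vx, vy; ring.
Qed.

Lemma on_line_neq (X P B C : point) : on_line X B C -> ~ on_line P B C -> X <> P.
Proof. intros hX hP e; subst; contradiction. Qed.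

Lemma nondeg_neq (A B C : point) : nondeg A B C -> A <> B /\ B <> C /\ C <> A.
Proof.
  unfold nondeg, collinear; intro h; repeat split; intro e; subst; apply h;
  unfold cross3, vx, vy; ring.
Qed.

Section MiquelBrocard.

Variables A B C P X Y Z : point.
Hypothesis hABC : nondeg A B C.
Hypothesis hPBC : ~ on_line P B C.
Hypothesis hPCA : ~ on_line P C A.
Hypothesis hPAB : ~ on_line P A B.
Hypothesis hM : miquel_triangle A B C P X Y Z.

Let hX : on_line X B C. Proof. apply hM. Qed.
Let hY : on_line Y C A. Proof. apply hM. Qed.
Let hZ : on_line Z A B. Proof. apply hM. Qed.

Let hdistinct : A <> B /\ B <> C /\ C <> A /\ P <> A /\ P <> B /\ P <> C /\
  X <> P /\ Y <> P /\ Z <> P /\ X <> B /\ X <> C /\ Y <> C /\ Y <> A /\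
  Z <> A /\ Z <> B.
Proof.
  destruct (nondeg_neq _ _ _ hABC) as (? & ? & ?).
  destruct (not_on_line_neq _ _ _ hPBC), (not_on_line_neq _ _ _ hPCA).
  pose proof (on_line_neq _ _ _ _ hX hPBC).
  pose proof (on_line_neq _ _ _ _ hY hPCA).
  pose proof (on_line_neq _ _ _ _ hZ hPAB).
  destruct hM as (_ & _ & _ & ? & ? & ? & ? & ? & ? & _).
  repeat split; assumption.
Qed.

Let inscribed_A := concyclic_inscribed_angle A Y Z P ltac:(apply hM).
Let inscribed_B := concyclic_inscribed_angle B Z X P ltac:(apply hM).
Let inscribed_C := concyclic_inscribed_angle C X Y P ltac:(apply hM).

Ltac chase_via O U V :=
  apply (dangle_eq_trans _ _ _ O U V); [congruence | congruence | | ].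

Lemma miquel_first_brocard : first_brocard A B C P -> first_brocard X Y Z P.
Proof.
  pose proof hdistinct as (? & ? & ? & ? & ? & ? & ? & ? & ? & ? & ? & ? & ? & ? & ?).
  intros [hAB hBC]; split.
  - chase_via C Y P; [apply dangle_eq_sym, inscribed_C |].
    chase_via C A P; [apply dangle_eq_sym, dangle_eq_collinear_l, hY |].
    chase_via A B P; [apply dangle_eq_sym; chase_via B C P; assumption |].
    chase_via A Z P; [apply dangle_eq_collinear_l, hZ |].
    apply inscribed_A.
  - chase_via A Z P; [apply dangle_eq_sym, inscribed_A |].
    chase_via A B P; [apply dangle_eq_sym, dangle_eq_collinear_l, hZ |].
    chase_via B C P; [assumption |].
    chase_via B X P; [apply dangle_eq_collinear_l, hX |].
    apply inscribed_B.
Qed.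

Lemma miquel_second_brocard : second_brocard A B C P -> second_brocard X Y Z P.
Proof.
  pose proof hdistinct as (? & ? & ? & ? & ? & ? & ? & ? & ? & ? & ? & ? & ? & ? & ?).
  intros [hAB hBC]; split.
  - chase_via B P Z; [apply dangle_eq_sym, dangle_eq_swap, inscribed_B |].
    chase_via B P A;
      [apply dangle_eq_collinear_r, collinear_swap23, collinear_swap12, hZ |].
    chase_via C P B; [assumption |].
    chase_via C P X; [apply dangle_eq_collinear_r, collinear_swap12, hX |].
    apply dangle_eq_swap, inscribed_C.
  - chase_via C P X; [apply dangle_eq_sym, dangle_eq_swap, inscribed_C |].
    chase_via C P B;
      [apply dangle_eq_sym, dangle_eq_collinear_r, collinear_swap12, hX |].
    chase_via A P C; [apply dangle_eq_sym; chase_via B P A; assumption |].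
    chase_via A P Y; [apply dangle_eq_collinear_r, collinear_swap12, hY |].
    apply dangle_eq_swap, inscribed_A.
Qed.

End MiquelBrocard.

Theorem theorem8 (A B C P X Y Z : point) :
  nondeg A B C ->
  ~ on_line P B C -> ~ on_line P C A -> ~ on_line P A B ->
  miquel_triangle A B C P X Y Z ->
  (first_brocard A B C P -> first_brocard X Y Z P) /\
  (second_brocard A B C P -> second_brocard X Y Z P).
Proof.
  intros hABC hPBC hPCA hPAB hM.
  split; [apply miquel_first_brocard | apply miquel_second_brocard]; assumption.
Qed.
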